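(* Let $X=\bigsqcup_{\lambda\in\Lambda}G_\lambda$ be an MCQ, $R$ a ring and $M$ a left $R$-module. For every 6-tuple $(f_1,f_2,f_3,f_4;\phi_1,\phi_2)$ of maps ($f_1,f_2:X\times X\to R$, $f_3,f_4:\bigsqcup_\lambda(G_\lambda\times G_\lambda)\to R$, $\phi_1:X\times X\to M$, $\phi_2:\bigsqcup_\lambda(G_\lambda\times G_\lambda)\to M$) satisfying conditions (0-i)–(4-$\phi$), there exists an augmented MCQ Alexander pair $(g_1,g_2;\psi_1,\psi_2)$ (with $g_1,g_2:X\times X\to R$, $\psi_1:X\times X\to M$, $\psi_2:\bigsqcup_\lambda(G_\lambda\times G_\lambda)\to M$) such that the MCQs $\widetilde X(f_1,f_2,f_3,f_4;\phi_1,\phi_2)$ and $\widetilde X(g_1,g_2;\psi_1,\psi_2)$ are isomorphic.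
   Context: A multiple conjugation quandle (MCQ) is a set $X=\bigsqcup_{\lambda\in\Lambda}G_\lambda$ that is a disjoint union of groups $G_\lambda$, together with a binary operation $\triangleleft:X\times X\to X$ such that: (i) for all $a,b\in G_\lambda$, $a\triangleleft b=b^{-1}ab$; (ii) for all $x\in X$ and $a,b\in G_\lambda$, $x\triangleleft e_\lambda=x$ and $x\triangleleft(ab)=(x\triangleleft a)\triangleleft b$, where $e_\lambda$ is the identity of $G_\lambda$; (iii) for all $x,y,z\in X$, $(x\triangleleft y)\triangleleft z=(x\triangleleft z)\triangleleft(y\triangleleft z)$; (iv) for all $x\in X$ and $a,b\in G_\lambda$, the elements $a\triangleleft x$ and $b\triangleleft x$ lie in a common group $G_\mu$ and $(ab)\triangleleft x=(a\triangleleft x)(b\triangleleft x)$. For $x\in X$, $G_x$ denotes the group containing $x$, $e_x$ its identity, $x^{-1}$ the inverse of $x$ in $G_x$. $\bigsqcup_{\lambda}(G_\lambda\times G_\lambda)$ is the set of pairs of elements lying in a common group $G_\lambda$. An MCQ isomorphism is a bijection $f$ with $f(x\triangleleft y)=f(x)\triangleleft f(y)$ for all $x,y$ and $f(ab)=f(a)f(b)$ whenever $a,b$ lie in a common group. Rings have a multiplicative identity $1\neq0$ and need not be commutative. Conditions (0-i)–(4-$\phi$) on a 6-tuple $(f_1,f_2,f_3,f_4;\phi_1,\phi_2)$: For all $\lambda$ and $a,b,c\in G_\lambda$: (0-i) $f_3(a,b)$, $f_4(a,b)$ invertible; (0-ii) $f_3(ab,c)f_3(a,b)=f_3(a,bc)$;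 (0-iii) $f_3(ab,c)f_4(a,b)=f_4(a,bc)f_3(b,c)$; (0-iv) $f_4(ab,c)=f_4(a,bc)f_4(b,c)$; (0-$\phi$) $f_3(ab,c)\phi_2(a,b)+\phi_2(ab,c)=f_4(a,bc)\phi_2(b,c)+\phi_2(a,bc)$. For all $a,b\in G_\lambda$: (1-i) $f_1(a,b)=f_4(b^{-1},ab)f_3(a,b)$; (1-ii) $f_3(b,b^{-1}ab)+f_4(b,b^{-1}ab)f_2(a,b)=f_4(a,b)$; (1-$\phi$) $f_4(b,b^{-1}ab)\phi_1(a,b)+\phi_2(b,b^{-1}ab)=\phi_2(a,b)$. For all $x\in X$, $a,b\in G_\lambda$: (2-i) $f_1(x,e_\lambda)=1$; (2-ii) $f_1(x,ab)=f_1(x\triangleleft a,b)f_1(x,a)$; (2-iii) $f_2(x,ab)f_3(a,b)=f_1(x\triangleleft a,b)f_2(x,a)$; (2-iv) $f_2(x,ab)f_4(a,b)=f_2(x\triangleleft a,b)$; (2-$\phi$i) $f_2(x,e_\lambda)\phi_2(e_\lambda,e_\lambda)=\phi_1(x,e_\lambda)$; (2-$\phi$ii) $f_2(x,ab)\phi_2(a,b)+\phi_1(x,ab)=f_1(x\triangleleft a,b)\phi_1(x,a)+\phi_1(x\triangleleft a,b)$. For all $x,y,z\in X$: (3-i) $f_1(x\triangleleft y,z)f_1(x,y)=f_1(x\triangleleft z,y\triangleleft z)f_1(x,z)$; (3-ii) $f_1(x\triangleleft y,z)f_2(x,y)=f_2(x\triangleleft z,y\triangleleft z)f_1(y,z)$;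 (3-iii) $f_2(x\triangleleft y,z)=f_1(x\triangleleft z,y\triangleleft z)f_2(x,z)+f_2(x\triangleleft z,y\triangleleft z)f_2(y,z)$; (3-$\phi$) $f_1(x\triangleleft y,z)\phi_1(x,y)+\phi_1(x\triangleleft y,z)=f_1(x\triangleleft z,y\triangleleft z)\phi_1(x,z)+f_2(x\triangleleft z,y\triangleleft z)\phi_1(y,z)+\phi_1(x\triangleleft z,y\triangleleft z)$. For all $a,b\in G_\lambda$, $x\in X$: (4-i) $f_1(ab,x)f_3(a,b)=f_3(a\triangleleft x,b\triangleleft x)f_1(a,x)$; (4-ii) $f_1(ab,x)f_4(a,b)=f_4(a\triangleleft x,b\triangleleft x)f_1(b,x)$; (4-iii) $f_2(ab,x)=f_3(a\triangleleft x,b\triangleleft x)f_2(a,x)+f_4(a\triangleleft x,b\triangleleft x)f_2(b,x)$; (4-$\phi$) $f_1(ab,x)\phi_2(a,b)+\phi_1(ab,x)=f_3(a\triangleleft x,b\triangleleft x)\phi_1(a,x)+f_4(a\triangleleft x,b\triangleleft x)\phi_1(b,x)+\phi_2(a\triangleleft x,b\triangleleft x)$. For such a 6-tuple, $\widetilde X(f_1,f_2,f_3,f_4;\phi_1,\phi_2)$ is the MCQ $\bigsqcup_\lambda(G_\lambda\times M)$ with $(x,u)\triangleleft(y,v)=(x\triangleleft y,\ f_1(x,y)u+f_2(x,y)v+\phi_1(x,y))$ and, for $a,b\in G_\lambda$, $(a,u)(b,v)=(ab,\ f_3(a,b)u+f_4(a,b)v+\phi_2(a,b))$. An MCQ Alexander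 pair is a pair of maps $g_1,g_2:X\times X\to R$ such that: (A1) for all $a,b\in G_\lambda$: $g_1(a,b)+g_2(a,b)=g_1(a,a^{-1}b)$; (A2) for all $a,b\in G_\lambda$, $x\in X$: $g_1(a,x)=g_1(b,x)$ and $g_2(ab,x)=g_2(a,x)+g_1(b\triangleleft x,a^{-1}\triangleleft x)g_2(b,x)$; (A3) for all $x\in X$, $a,b\in G_\lambda$: $g_1(x,e_\lambda)=1$, $g_1(x,ab)=g_1(x\triangleleft a,b)g_1(x,a)$, $g_2(x,ab)=g_1(x\triangleleft a,b)g_2(x,a)$; (A4) for all $x,y,z\in X$: $g_1(x\triangleleft y,z)g_1(x,y)=g_1(x\triangleleft z,y\triangleleft z)g_1(x,z)$; $g_1(x\triangleleft y,z)g_2(x,y)=g_2(x\triangleleft z,y\triangleleft z)g_1(y,z)$; $g_2(x\triangleleft y,z)=g_1(x\triangleleft z,y\triangleleft z)g_2(x,z)+g_2(x\triangleleft z,y\triangleleft z)g_2(y,z)$. For an MCQ Alexander pair $(g_1,g_2)$, a $(g_1,g_2)$-twisted 2-cocycle is a pair $\psi_1:X\times X\to M$, $\psi_2:\bigsqcup_\lambda(G_\lambda\times G_\lambda)\to M$ with: (T1) for $a,b,c\in G_\lambda$: $\psi_2(a,b)+\psi_2(ab,c)=g_1(a,a^{-1})\psi_2(b,c)+\psi_2(a,bc)$; (T2) for $a,b\in G_\lambda$: $g_1(b,b^{-1})\psi_1(a,b)+\psi_2(b,b^{-1}ab)=\psi_2(a,b)$; (T3) for $x\in X$, $a,b\in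 G_\lambda$: $g_2(x,ab)\psi_2(a,b)+\psi_1(x,ab)=g_1(x\triangleleft a,b)\psi_1(x,a)+\psi_1(x\triangleleft a,b)$; (T4) for $x,y,z\in X$: $g_1(x\triangleleft y,z)\psi_1(x,y)+\psi_1(x\triangleleft y,z)=g_1(x\triangleleft z,y\triangleleft z)\psi_1(x,z)+g_2(x\triangleleft z,y\triangleleft z)\psi_1(y,z)+\psi_1(x\triangleleft z,y\triangleleft z)$; (T5) for $a,b\in G_\lambda$, $x\in X$: $g_1(ab,x)\psi_2(a,b)+\psi_1(ab,x)=\psi_1(a,x)+g_1(a\triangleleft x,a^{-1}\triangleleft x)\psi_1(b,x)+\psi_2(a\triangleleft x,b\triangleleft x)$. $(g_1,g_2;\psi_1,\psi_2)$ is an augmented MCQ Alexander pair if $(g_1,g_2)$ is an MCQ Alexander pair and $(\psi_1,\psi_2)$ is a $(g_1,g_2)$-twisted 2-cocycle. For such a pair, $\widetilde X(g_1,g_2;\psi_1,\psi_2)$ is the MCQ $\bigsqcup_\lambda(G_\lambda\times M)$ with $(x,u)\triangleleft(y,v)=(x\triangleleft y,\ g_1(x,y)u+g_2(x,y)v+\psi_1(x,y))$ and, for $a,b\in G_\lambda$, $(a,u)(b,v)=(ab,\ u+g_1(a,a^{-1})v+\psi_2(a,b))$. *)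

From mathcomp Require Import all_boot all_algebra.
Set Implicit Arguments. Unset Strict Implicit. Unset Printing Implicit Defensive.
Import GRing.Theory.
Local Open Scope ring_scope.

(* A multiple conjugation quandle X = disjoint union of groups G_l (l : idx).
   [lab x] is the index l of the group G_x containing x; [mul] is the group
   product (only meaningful on pairs in a common group); [one l] = e_l;
   [inv x] = inverse of x in G_x; [tri] is the operation <|. *)
Record MCQ := {
  carrier :> Type;
  idx : Type;
  lab : carrier -> idx;
  mul : carrier -> carrier -> carrier;
  one : idx -> carrier;
  inv : carrier -> carrier;
  tri : carrier -> carrier -> carrier;
  lab_mul : forall a b, lab a = lab b -> lab (mul a b) = lab a;
  lab_one : forall l, lab (one l) = l;
  lab_inv : forall a, lab (inv a) = lab a;
  mulA : forall a b c, lab a = lab b -> lab b = lab c ->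
    mul (mul a b) c = mul a (mul b c);
  mul1x : forall a, mul (one (lab a)) a = a;
  mulx1 : forall a, mul a (one (lab a)) = a;
  mulVx : forall a, mul (inv a) a = one (lab a);
  mulxV : forall a, mul a (inv a) = one (lab a);
  mcq_i : forall a b, lab a = lab b -> tri a b = mul (mul (inv b) a) b;
  mcq_ii1 : forall x l, tri x (one l) = x;
  mcq_ii2 : forall x a b, lab a = lab b -> tri x (mul a b) = tri (tri x a) b;
  mcq_iii : forall x y z, tri (tri x y) z = tri (tri x z) (tri y z);
  mcq_iv1 : forall x a b, lab a = lab b -> lab (tri a x) = lab (tri b x);
  mcq_iv2 : forall x a b, lab a = lab b ->
    tri (mul a b) x = mul (tri a x) (tri b x)
}.

Arguments lab {_}. Arguments mul {_}. Arguments one {_}. Arguments inv {_}.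
Arguments tri {_}.

Definition invertible (R : nzRingType) (r : R) := exists s : R, r * s = 1 /\ s * r = 1.

Section Conditions.
Variables (X : MCQ) (R : nzRingType) (M : lmodType R).

(* Maps on the disjoint union of G_l x G_l are represented by total maps
   X -> X -> _, of which only the values on pairs with lab a = lab b matter. *)
Definition same (a b : X) := lab a = lab b.

Definition six_tuple_conditions (f1 f2 f3 f4 : X -> X -> R) (phi1 phi2 : X -> X -> M) : Prop :=
  (* (0) *)
  (forall a b, same a b -> invertible (f3 a b) /\ invertible (f4 a b)) /\
  (forall a b c, same a b -> same b c -> f3 (mul a b) c * f3 a b = f3 a (mul b c)) /\
  (forall a b c, same a b -> same b c ->
     f3 (mul a b) c * f4 a b = f4 a (mul b c) * f3 b c) /\
  (forall a b c, same a b -> same b c -> f4 (mul a b) c = f4 a (mul b c) * f4 b c) /\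
  (forall a b c, same a b -> same b c ->
     f3 (mul a b) c *: phi2 a b + phi2 (mul a b) c
     = f4 a (mul b c) *: phi2 b c + phi2 a (mul b c)) /\
  (* (1) *)
  (forall a b, same a b -> f1 a b = f4 (inv b) (mul a b) * f3 a b) /\
  (forall a b, same a b ->
     f3 b (mul (mul (inv b) a) b) + f4 b (mul (mul (inv b) a) b) * f2 a b = f4 a b) /\
  (forall a b, same a b ->
     f4 b (mul (mul (inv b) a) b) *: phi1 a b + phi2 b (mul (mul (inv b) a) b)
     = phi2 a b) /\
  (* (2) *)
  (forall x l, f1 x (one l) = 1) /\
  (forall x a b, same a b -> f1 x (mul a b) = f1 (tri x a) b * f1 x a) /\
  (forall x a b, same a b -> f2 x (mul a b) * f3 a b = f1 (tri x a) b * f2 x a) /\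
  (forall x a b, same a b -> f2 x (mul a b) * f4 a b = f2 (tri x a) b) /\
  (forall x l, f2 x (one l) *: phi2 (one l) (one l) = phi1 x (one l)) /\
  (forall x a b, same a b ->
     f2 x (mul a b) *: phi2 a b + phi1 x (mul a b)
     = f1 (tri x a) b *: phi1 x a + phi1 (tri x a) b) /\
  (* (3) *)
  (forall x y z, f1 (tri x y) z * f1 x y = f1 (tri x z) (tri y z) * f1 x z) /\
  (forall x y z, f1 (tri x y) z * f2 x y = f2 (tri x z) (tri y z) * f1 y z) /\
  (forall x y z, f2 (tri x y) z
     = f1 (tri x z) (tri y z) * f2 x z + f2 (tri x z) (tri y z) * f2 y z) /\
  (forall x y z, f1 (tri x y) z *: phi1 x y + phi1 (tri x y) z
     = f1 (tri x z) (tri y z) *: phi1 x z + f2 (tri x z) (tri y z) *: phi1 y z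
       + phi1 (tri x z) (tri y z)) /\
  (* (4) *)
  (forall a b x, same a b ->
     f1 (mul a b) x * f3 a b = f3 (tri a x) (tri b x) * f1 a x) /\
  (forall a b x, same a b ->
     f1 (mul a b) x * f4 a b = f4 (tri a x) (tri b x) * f1 b x) /\
  (forall a b x, same a b ->
     f2 (mul a b) x = f3 (tri a x) (tri b x) * f2 a x + f4 (tri a x) (tri b x) * f2 b x) /\
  (forall a b x, same a b ->
     f1 (mul a b) x *: phi2 a b + phi1 (mul a b) x
     = f3 (tri a x) (tri b x) *: phi1 a x + f4 (tri a x) (tri b x) *: phi1 b x
       + phi2 (tri a x) (tri b x)).

Definition mcq_alexander_pair (g1 g2 : X -> X -> R) : Prop :=
  (forall a b, same a b -> g1 a b + g2 a b = g1 a (mul (inv a) b)) /\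
  (forall a b x, same a b -> g1 a x = g1 b x) /\
  (forall a b x, same a b ->
     g2 (mul a b) x = g2 a x + g1 (tri b x) (tri (inv a) x) * g2 b x) /\
  (forall x l, g1 x (one l) = 1) /\
  (forall x a b, same a b -> g1 x (mul a b) = g1 (tri x a) b * g1 x a) /\
  (forall x a b, same a b -> g2 x (mul a b) = g1 (tri x a) b * g2 x a) /\
  (forall x y z, g1 (tri x y) z * g1 x y = g1 (tri x z) (tri y z) * g1 x z) /\
  (forall x y z, g1 (tri x y) z * g2 x y = g2 (tri x z) (tri y z) * g1 y z) /\
  (forall x y z, g2 (tri x y) z
     = g1 (tri x z) (tri y z) * g2 x z + g2 (tri x z) (tri y z) * g2 y z).

Definition twisted_2cocycle (g1 g2 : X -> X -> R) (psi1 psi2 : X -> X -> M) : Prop :=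
  (forall a b c, same a b -> same b c ->
     psi2 a b + psi2 (mul a b) c = g1 a (inv a) *: psi2 b c + psi2 a (mul b c)) /\
  (forall a b, same a b ->
     g1 b (inv b) *: psi1 a b + psi2 b (mul (mul (inv b) a) b) = psi2 a b) /\
  (forall x a b, same a b ->
     g2 x (mul a b) *: psi2 a b + psi1 x (mul a b)
     = g1 (tri x a) b *: psi1 x a + psi1 (tri x a) b) /\
  (forall x y z, g1 (tri x y) z *: psi1 x y + psi1 (tri x y) z
     = g1 (tri x z) (tri y z) *: psi1 x z + g2 (tri x z) (tri y z) *: psi1 y z
       + psi1 (tri x z) (tri y z)) /\
  (forall a b x, same a b ->
     g1 (mul a b) x *: psi2 a b + psi1 (mul a b) x
     = psi1 a x + g1 (tri a x) (tri (inv a) x) *: psi1 b x + psi2 (tri a x) (tri b x)).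

Definition augmented_mcq_alexander_pair g1 g2 psi1 psi2 : Prop :=
  mcq_alexander_pair g1 g2 /\ twisted_2cocycle g1 g2 psi1 psi2.

(* The extensions, on the carrier X * M = disjoint union of G_l x M;
   (x,u) lies in the group indexed by lab x. *)
Definition extF_tri (f1 f2 : X -> X -> R) (phi1 : X -> X -> M)
  (p q : X * M) : X * M :=
  (tri p.1 q.1, f1 p.1 q.1 *: p.2 + f2 p.1 q.1 *: q.2 + phi1 p.1 q.1).
Definition extF_mul (f3 f4 : X -> X -> R) (phi2 : X -> X -> M)
  (p q : X * M) : X * M :=
  (mul p.1 q.1, f3 p.1 q.1 *: p.2 + f4 p.1 q.1 *: q.2 + phi2 p.1 q.1).
Definition extG_tri (g1 g2 : X -> X -> R) (psi1 : X -> X -> M)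
  (p q : X * M) : X * M :=
  (tri p.1 q.1, g1 p.1 q.1 *: p.2 + g2 p.1 q.1 *: q.2 + psi1 p.1 q.1).
Definition extG_mul (g1 : X -> X -> R) (psi2 : X -> X -> M)
  (p q : X * M) : X * M :=
  (mul p.1 q.1, p.2 + g1 p.1 (inv p.1) *: q.2 + psi2 p.1 q.1).

End Conditions.

Definition mcq_isomorphism (A B LA LB : Type)
  (labA : A -> LA) (mulA triA : A -> A -> A)
  (labB : B -> LB) (mulB triB : B -> B -> B) (F : A -> B) : Prop :=
  bijective F /\
  (forall x y, F (triA x y) = triB (F x) (F y)) /\
  (forall a b, labA a = labA b -> F (mulA a b) = mulB (F a) (F b)).

(* Rescaling the fibre over x by the inverse q x of the unit gauge x = f3 (e_x, x), i.e.
   (x, u) |-> (x, q x *: u), turns the extension built from (f1, f2, f3, f4; phi1, phi2) into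
   one whose third structure map is 1, by (0-ii).  By (0-iii) and (0-iv) its fourth map
   becomes (a, b) |-> twist a for a homomorphism twist from each G_l to the units of R, and
   (1-i) identifies twist a with the rescaled g1 (a, a^-1).  So the rescaled extension has the
   shape of X~(g1, g2; psi1, psi2), and the remaining conditions turn, after cancelling gauge
   against q, into the axioms of an augmented MCQ Alexander pair. *)
From mathcomp Require Import all_boot all_algebra.
From Pilot Require Import Defs.
From Stdlib Require Import ClassicalEpsilon.
Set Implicit Arguments. Unset Strict Implicit. Unset Printing Implicit Defensive.
Import GRing.Theory.
Local Open Scope ring_scope.

Section MCQGroupTheory.
Variable X : MCQ.
Implicit Types (a b x : X) (l : idx X).

Lemma mul_one_one l : mul (one l) (one l) = one l.
Proof. by rewrite -{2}(lab_one l) mulx1. Qed.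

Lemma invK a : inv (inv a) = a.
Proof.
rewrite -[inv (inv a)]mulx1 !lab_inv -(mulVx a) -Defs.mulA ?lab_inv //.
by rewrite mulVx lab_inv mul1x.
Qed.

Lemma inv_uniq a b : lab a = lab b -> mul a b = one (lab a) -> b = inv a.
Proof.
move=> ab abE.
rewrite -[b]mul1x -ab -(mulVx a) Defs.mulA ?lab_inv // abE.
by rewrite -(lab_inv a) mulx1.
Qed.

Lemma idem_eq_one a : mul a a = a -> a = one (lab a).
Proof.
move=> aa; rewrite -(mulVx a) -{3}aa -Defs.mulA ?lab_inv //.
by rewrite mulVx mul1x.
Qed.

Lemma tri_one l x : tri (one l) x = one (lab (tri (one l) x)).
Proof. by apply: idem_eq_one; rewrite -mcq_iv2 // mul_one_one. Qed.

Lemma tri_inv a x : tri (inv a) x = inv (tri a x).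
Proof.
apply: inv_uniq; first by apply: mcq_iv1; rewrite lab_inv.
rewrite -mcq_iv2 ?lab_inv // mulxV tri_one.
by congr one; apply: mcq_iv1; rewrite lab_one.
Qed.

Lemma invM a b : lab a = lab b -> inv (mul a b) = mul (inv b) (inv a).
Proof.
move=> ab; apply: esym; apply: inv_uniq; first by rewrite !lab_mul ?lab_inv.
rewrite Defs.mulA ?lab_mul ?lab_inv //.
rewrite -[mul b (mul (inv b) (inv a))]Defs.mulA ?lab_inv // mulxV.
by rewrite -ab -{1}(lab_inv a) mul1x mulxV.
Qed.

Lemma mulKV a b : lab a = lab b -> mul a (mul (inv a) b) = b.
Proof. by move=> ab; rewrite -Defs.mulA ?lab_inv // mulxV ab mul1x. Qed.

Lemma mul_conj a b : lab a = lab b -> mul b (mul (mul (inv b) a) b) = mul a b.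
Proof. by move=> ab; rewrite -Defs.mulA ?lab_mul ?lab_inv // mulKV. Qed.

Lemma invMV a b : lab a = lab b -> inv (mul (inv a) b) = mul (inv b) a.
Proof. by move=> ab; rewrite invM ?lab_inv // invK. Qed.

End MCQGroupTheory.

Lemma invertible_idem_eq1 (R : nzRingType) (r : R) : invertible r -> r * r = r -> r = 1.
Proof. by case=> s [_ sr] rr; rewrite -sr -{2}rr mulrA sr mul1r. Qed.

Lemma invertible_choice (T : Type) (R : nzRingType) (r : T -> R) :
  (forall x, invertible (r x)) -> exists s : T -> R, forall x, r x * s x = 1 /\ s x * r x = 1.
Proof. exact: choice. Qed.

Section Normalization.
Variables (X : MCQ) (R : nzRingType) (M : lmodType R).
Variables (f1 f2 f3 f4 : X -> X -> R) (phi1 phi2 : X -> X -> M).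
Implicit Types (a b c x y z : X) (l : idx X).

Hypothesis f34_unit : forall a b, same a b -> invertible (f3 a b) /\ invertible (f4 a b).
Hypothesis f3_cocycle : forall a b c, same a b -> same b c ->
  f3 (mul a b) c * f3 a b = f3 a (mul b c).
Hypothesis f3_f4_mul : forall a b c, same a b -> same b c ->
  f3 (mul a b) c * f4 a b = f4 a (mul b c) * f3 b c.
Hypothesis f4_cocycle : forall a b c, same a b -> same b c ->
  f4 (mul a b) c = f4 a (mul b c) * f4 b c.
Hypothesis phi2_cocycle : forall a b c, same a b -> same b c ->
  f3 (mul a b) c *: phi2 a b + phi2 (mul a b) c
  = f4 a (mul b c) *: phi2 b c + phi2 a (mul b c).
Hypothesis f1_conj : forall a b, same a b -> f1 a b = f4 (inv b) (mul a b) * f3 a b.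
Hypothesis f2_conj : forall a b, same a b ->
  f3 b (mul (mul (inv b) a) b) + f4 b (mul (mul (inv b) a) b) * f2 a b = f4 a b.
Hypothesis phi1_conj : forall a b, same a b ->
  f4 b (mul (mul (inv b) a) b) *: phi1 a b + phi2 b (mul (mul (inv b) a) b) = phi2 a b.
Hypothesis f1_one_r : forall x l, f1 x (one l) = 1.
Hypothesis f1_mul_r : forall x a b, same a b -> f1 x (mul a b) = f1 (tri x a) b * f1 x a.
Hypothesis f2_mul_r : forall x a b, same a b ->
  f2 x (mul a b) * f3 a b = f1 (tri x a) b * f2 x a.
Hypothesis phi1_mul_r : forall x a b, same a b ->
  f2 x (mul a b) *: phi2 a b + phi1 x (mul a b)
  = f1 (tri x a) b *: phi1 x a + phi1 (tri x a) b.
Hypothesis f1_tri : forall x y z,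
  f1 (tri x y) z * f1 x y = f1 (tri x z) (tri y z) * f1 x z.
Hypothesis f1_f2_tri : forall x y z,
  f1 (tri x y) z * f2 x y = f2 (tri x z) (tri y z) * f1 y z.
Hypothesis f2_tri : forall x y z, f2 (tri x y) z
  = f1 (tri x z) (tri y z) * f2 x z + f2 (tri x z) (tri y z) * f2 y z.
Hypothesis phi1_tri : forall x y z, f1 (tri x y) z *: phi1 x y + phi1 (tri x y) z
  = f1 (tri x z) (tri y z) *: phi1 x z + f2 (tri x z) (tri y z) *: phi1 y z
    + phi1 (tri x z) (tri y z).
Hypothesis f1_mul_l : forall a b x, same a b ->
  f1 (mul a b) x * f3 a b = f3 (tri a x) (tri b x) * f1 a x.
Hypothesis f2_mul_l : forall a b x, same a b ->
  f2 (mul a b) x = f3 (tri a x) (tri b x) * f2 a x + f4 (tri a x) (tri b x) * f2 b x.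
Hypothesis phi_mul_l : forall a b x, same a b ->
  f1 (mul a b) x *: phi2 a b + phi1 (mul a b) x
  = f3 (tri a x) (tri b x) *: phi1 a x + f4 (tri a x) (tri b x) *: phi1 b x
    + phi2 (tri a x) (tri b x).

Definition gauge x : R := f3 (one (lab x)) x.

Variable q : X -> R.
Hypothesis gaugeK : forall x, gauge x * q x = 1 /\ q x * gauge x = 1.

Definition twist x : R := q x * f4 x (one (lab x)).

Definition g1 x y : R := q (tri x y) * f1 x y * gauge x.
Definition g2 x y : R := q (tri x y) * f2 x y * gauge y.
Definition psi1 x y : M := q (tri x y) *: phi1 x y.
Definition psi2 a b : M := q (mul a b) *: phi2 a b.
Definition gauge_map (u : X * M) : X * M := (u.1, q u.1 *: u.2).

Lemma mulr_gaugeK r x : r * gauge x * q x = r.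
Proof. by rewrite -mulrA (gaugeK x).1 mulr1. Qed.

Lemma mulr_qK r x : r * q x * gauge x = r.
Proof. by rewrite -mulrA (gaugeK x).2 mulr1. Qed.

Lemma gaugeM y z : lab y = lab z -> f3 y z * gauge y = gauge (mul y z).
Proof.
move=> yz; have := @f3_cocycle (one (lab y)) y z (lab_one _) yz.
by rewrite mul1x /gauge lab_mul.
Qed.

Lemma q_f3 y z : lab y = lab z -> q (mul y z) * f3 y z = q y.
Proof.
move=> yz.
by rewrite -[q y]mul1r -(gaugeK (mul y z)).2 -gaugeM // !mulrA mulr_gaugeK.
Qed.

Lemma q_f4 y z : lab y = lab z -> q (mul y z) * f4 y z = twist y * q z.
Proof.
move=> yz.
have f3_f4_one : f3 y z * f4 y (one (lab y)) = f4 y z * gauge z.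
  have := @f3_f4_mul y (one (lab y)) z (esym (lab_one _)) (etrans (lab_one _) yz).
  rewrite mulx1 (_ : mul (one (lab y)) z = z); last by rewrite yz mul1x.
  by rewrite /gauge -yz => ->.
rewrite /twist -[q (mul y z) * _](mulr_gaugeK _ z).
by rewrite -[q (mul y z) * f4 y z * gauge z]mulrA -f3_f4_one mulrA q_f3.
Qed.

Lemma gauge_one l : gauge (one l) = 1.
Proof.
apply: invertible_idem_eq1; first by exists (q (one l)); exact: gaugeK.
have f3_one : f3 (one l) (one l) = gauge (one l) by rewrite /gauge lab_one.
by rewrite -{3}mul_one_one -gaugeM // f3_one.
Qed.

Lemma q_one l : q (one l) = 1.
Proof. by rewrite -[q _]mul1r -{1}(gauge_one l) (gaugeK _).1. Qed.

Lemma twist_one l : twist (one l) = 1.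
Proof.
rewrite /twist lab_one q_one mul1r; apply: invertible_idem_eq1.
  by case: (@f34_unit (one l) (one l) erefl).
by have := @f4_cocycle (one l) (one l) (one l) erefl erefl; rewrite mul_one_one => <-.
Qed.

Lemma twistM a b : lab a = lab b -> twist (mul a b) = twist a * twist b.
Proof.
move=> ab; rewrite /twist lab_mul // ab f4_cocycle //; last by rewrite /same lab_one.
by rewrite mulx1 mulrA q_f4 // /twist -ab !mulrA.
Qed.

Lemma twistVK b : twist b * twist (inv b) = 1 /\ twist (inv b) * twist b = 1.
Proof. by split; rewrite -twistM ?lab_inv // ?mulxV ?mulVx twist_one. Qed.

Lemma g1E a b : lab a = lab b -> g1 a b = twist (inv b).
Proof.
move=> ab; rewrite /g1 f1_conj // mcq_i // Defs.mulA ?lab_inv //.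
rewrite mulrA q_f4 ?lab_mul ?lab_inv // -mulrA -mulrA gaugeM //.
by rewrite (gaugeK _).2 mulr1.
Qed.

Lemma g1_inv a : g1 a (inv a) = twist a.
Proof. by rewrite g1E ?lab_inv // invK. Qed.

Lemma g1M_l a b x : lab a = lab b -> g1 (mul a b) x = g1 a x.
Proof.
move=> ab; rewrite /g1 -gaugeM // mulrA -(mulrA (q _)) f1_mul_l // (mcq_iv2 x ab).
by rewrite mulrA q_f3 ?(mcq_iv1 x ab).
Qed.

Lemma g1_add_g2 a b : lab a = lab b -> g1 a b + g2 a b = g1 a (mul (inv a) b).
Proof.
move=> ab.
have f3_gauge : q (mul a b) * f3 b (mul (mul (inv b) a) b) * gauge b = 1.
  by rewrite -(mul_conj ab) q_f3 ?lab_mul ?lab_inv // (gaugeK b).2.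
have f4_f2_gauge : q (mul a b) * (f4 b (mul (mul (inv b) a) b) * f2 a b) * gauge b
                   = twist b * g2 a b.
  by rewrite -(mul_conj ab) mulrA q_f4 ?lab_mul ?lab_inv // /g2 (mcq_i ab) !mulrA.
have f4_gauge : q (mul a b) * f4 a b * gauge b = twist a by rewrite q_f4 // mulr_qK.
have twist_g2 : twist b * g2 a b = twist a - 1.
  rewrite -f4_f2_gauge -f4_gauge -f3_gauge -(f2_conj ab) mulrDr mulrDl.
  by rewrite [X in _ = X - _]addrC addrK.
rewrite g1E // g1E ?lab_mul ?lab_inv // invMV // twistM ?lab_inv //.
rewrite -[twist (inv b) + _]mul1r -(twistVK b).2 -mulrA mulrDr (twistVK b).1 twist_g2.
by rewrite addrC subrK.
Qed.

Lemma g2M_l a b x : lab a = lab b ->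
  g2 (mul a b) x = g2 a x + g1 (tri b x) (tri (inv a) x) * g2 b x.
Proof.
move=> ab; have abx := mcq_iv1 x ab.
rewrite g1E; last by apply: mcq_iv1; rewrite lab_inv.
rewrite tri_inv invK /g2 f2_mul_l // mulrDr mulrDl (mcq_iv2 x ab) mulrA q_f3 //.
by rewrite mulrA q_f4 // !mulrA.
Qed.

Lemma mcq_alexander_pair_g : mcq_alexander_pair g1 g2.
Proof.
split; [exact: g1_add_g2|split; [|split; [exact: g2M_l|split; [|split; [|split]]]]].
- by move=> a b x ab; rewrite -(mulKV ab) g1M_l ?lab_mul ?lab_inv.
- by move=> x l; rewrite /g1 mcq_ii1 f1_one_r mulr1 (gaugeK x).2.
- by move=> x a b ab; rewrite /g1 (mcq_ii2 x ab) f1_mul_r // !mulrA mulr_gaugeK.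
- move=> x a b ab; rewrite /g1 /g2 (mcq_ii2 x ab) !mulrA mulr_gaugeK.
  by rewrite -[_ * f1 _ _ * f2 x a]mulrA -f2_mul_r // -gaugeM // !mulrA.
split; [|split] => x y z; rewrite /g1 /g2.
- by rewrite !mulrA !mulr_gaugeK mcq_iii -[_ * f1 _ _ * f1 x y]mulrA f1_tri !mulrA.
- by rewrite !mulrA !mulr_gaugeK mcq_iii -[_ * f1 _ _ * f2 x y]mulrA f1_f2_tri !mulrA.
- by rewrite f2_tri mcq_iii mulrDr mulrDl !mulrA !mulr_gaugeK.
Qed.

Lemma psi2_cocycle a b c : lab a = lab b -> lab b = lab c ->
  psi2 a b + psi2 (mul a b) c = g1 a (inv a) *: psi2 b c + psi2 a (mul b c).
Proof.
move=> ab bc; have abc : lab (mul a b) = lab c by rewrite lab_mul // ab.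
rewrite /psi2 g1_inv.
have := congr1 (fun v => q (mul (mul a b) c) *: v) (phi2_cocycle ab bc).
by rewrite /= !scalerDr !scalerA (q_f3 abc) (Defs.mulA ab bc) q_f4 ?lab_mul.
Qed.

Lemma psi1_psi2_conj a b : lab a = lab b ->
  g1 b (inv b) *: psi1 a b + psi2 b (mul (mul (inv b) a) b) = psi2 a b.
Proof.
move=> ab; rewrite g1_inv /psi1 /psi2 scalerA (mcq_i ab).
have := congr1 (fun v => q (mul a b) *: v) (phi1_conj ab).
by rewrite /= scalerDr !scalerA -{1 2}(mul_conj ab) q_f4 ?lab_mul ?lab_inv.
Qed.

Lemma twisted_2cocycle_psi : twisted_2cocycle g1 g2 psi1 psi2.
Proof.
split; [exact: psi2_cocycle|split; [exact: psi1_psi2_conj|split; [|split]]].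
- move=> x a b ab; rewrite /g1 /g2 /psi1 /psi2 !scalerA !mulr_gaugeK (mcq_ii2 x ab).
  by rewrite -!scalerA -!scalerDr phi1_mul_r.
- move=> x y z; rewrite /g1 /g2 /psi1 !scalerA !mulr_gaugeK mcq_iii.
  by rewrite -!scalerA -!scalerDr phi1_tri.
- move=> a b x ab; have abx := mcq_iv1 x ab.
  rewrite (@g1E (tri a x) (tri (inv a) x)); last by apply: mcq_iv1; rewrite lab_inv.
  rewrite tri_inv invK /g1 /psi1 /psi2 scalerA mulr_gaugeK (mcq_iv2 x ab) scalerA.
  by rewrite -(q_f4 abx) -(q_f3 abx) -!scalerA -!scalerDr phi_mul_l.
Qed.

Lemma gauge_map_isomorphism :
  mcq_isomorphism (fun u : X * M => lab u.1) (extF_mul f3 f4 phi2) (extF_tri f1 f2 phi1)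
    (fun u : X * M => lab u.1) (extG_mul g1 psi2) (extG_tri g1 g2 psi1) gauge_map.
Proof.
split; [|split].
- exists (fun u => (u.1, gauge u.1 *: u.2)) => -[x u]; rewrite /gauge_map /=.
    by rewrite scalerA (gaugeK x).1 scale1r.
  by rewrite scalerA (gaugeK x).2 scale1r.
- move=> [x u] [y v]; rewrite /gauge_map /extF_tri /extG_tri /=; congr (_, _).
  by rewrite /g1 /g2 /psi1 !scalerDr !scalerA !mulr_gaugeK.
- move=> [a u] [b v] /= ab; rewrite /gauge_map /extF_mul /extG_mul /=; congr (_, _).
  by rewrite /psi2 !scalerDr !scalerA q_f3 // q_f4 // g1_inv.
Qed.

End Normalization.

Theorem theorem4p3 (X : MCQ) (R : nzRingType) (M : lmodType R)
  (f1 f2 f3 f4 : X -> X -> R) (phi1 phi2 : X -> X -> M) :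
  six_tuple_conditions f1 f2 f3 f4 phi1 phi2 ->
  exists (g1 g2 : X -> X -> R) (psi1 psi2 : X -> X -> M),
    augmented_mcq_alexander_pair g1 g2 psi1 psi2 /\
    exists F : X * M -> X * M,
      mcq_isomorphism (fun p : X * M => lab p.1)
        (extF_mul f3 f4 phi2) (extF_tri f1 f2 phi1)
        (fun p : X * M => lab p.1)
        (extG_mul g1 psi2) (extG_tri g1 g2 psi1) F.
Proof.
move=> [f34_unit [? [? [? [? [? [? [? [? [? [? [_ [_ [? [? [? [? [? [? [_ [? ?]]]]]]]]]]]]]]]]]]]]].
have [q gaugeK] := invertible_choice (r := gauge f3)
  (fun x => (f34_unit (one (lab x)) x (lab_one _)).1).
exists (g1 f1 f3 q), (g2 f2 f3 q), (psi1 phi1 q), (psi2 phi2 q).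
split; first split.
- by apply: mcq_alexander_pair_g; eassumption.
- by apply: twisted_2cocycle_psi; eassumption.
- by exists (gauge_map q); apply: gauge_map_isomorphism.
Qed.
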